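(* Let $G$ be a cycle and $H=(T,L)$ a demand digraph with $T\subseteq V$. If every arc of the directed version of $G$ is contained in at most two routes, then $(G,H)$ has the uniqueness property.
   Context: A supply graph is a finite undirected graph $G=(V,E)$; its directed version (arc set $A$) replaces each edge by two opposite arcs. A demand digraph is a simple digraph $H=(T,L)$ with $T\subseteq V$, arcs called OD-pairs. For $(o,d)\in L$ an $(o,d)$-route is a directed $(o,d)$-path in the directed version of $G$. The population is a bounded real interval $I$ with Lebesgue measure $\lambda$, partitioned into measurable $I_{(o,d)}$. A strategy profile is a measurable $\sigma:I\to\{\text{routes}\}$ with $\sigma(i)$ an $(o,d)$-route for $i\in I_{(o,d)}$; flow $f_a=\lambda\{i:a\in\sigma(i)\}$. Each user $i$ has nonnegative continuous strictly increasing cost functions $c_a^i:\mathbb R_+\to\mathbb R_+$ with $i\mapsto c^i_a(x)$ measurable; route cost is $\sum_{a\in r}c_a^i(f_a)$. An equilibrium is a strategy profile where each user's route has minimal cost among the routes of his OD-pair. $(G,H)$ has the uniqueness property if for every measurable partition $(I_{(o,d)})_{(o,d)\in L}$ of $I$ and every assignment of such cost functions, the flow on each arc is the same in all equilibria. *)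

From Stdlib Require Import Reals List ClassicalEpsilon.
Open Scope R_scope.

Definition interval_cover_sum (A : R -> Prop) (s : R) : Prop :=
  exists a b : nat -> R,
    (forall k, a k <= b k) /\
    (forall x, A x -> exists k, a k < x < b k) /\
    infinite_sum (fun k => b k - a k) s.

Definition is_glb (E : R -> Prop) (m : R) : Prop :=
  (forall s, E s -> m <= s) /\
  (forall m', (forall s, E s -> m' <= s) -> m' <= m).

(* Lebesgue outer measure (meaningful for bounded sets, which is all we use) *)
Definition lebesgue_outer (A : R -> Prop) : R :=
  epsilon (inhabits 0) (fun m => is_glb (interval_cover_sum A) m).

Definition bounded_set (A : R -> Prop) : Prop :=
  exists M, forall x, A x -> Rabs x <= M.

(* Caratheodory criterion (test sets restricted to bounded sets) *)
Definition lebesgue_measurable (E : R -> Prop) : Prop :=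
  forall A, bounded_set A ->
    lebesgue_outer A =
      lebesgue_outer (fun x => A x /\ E x) + lebesgue_outer (fun x => A x /\ ~ E x).

Definition is_bounded_interval (I : R -> Prop) : Prop :=
  bounded_set I /\ (forall x y z, I x -> I z -> x <= y <= z -> I y).

Definition cycle_arc (n : nat) (a : nat * nat) : Prop :=
  let (u, v) := a in
  (u < n)%nat /\ (v < n)%nat /\ (v = (S u) mod n \/ u = (S v) mod n)%nat.

Fixpoint consecutive_arcs (p : list nat) : list (nat * nat) :=
  match p with
  | x :: ((y :: _) as q) => (x, y) :: consecutive_arcs q
  | _ => nil
  end.

Definition is_route (n : nat) (od : nat * nat) (p : list nat) : Prop :=
  let (o, d) := od in
  hd_error p = Some o /\ last p o = d /\ NoDup p /\
  Forall (cycle_arc n) (consecutive_arcs p).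

(* H = (T, L) simple demand digraph with T a subset of V *)
Definition is_demand (n : nat) (L : list (nat * nat)) : Prop :=
  NoDup L /\
  forall od, In od L -> (fst od < n)%nat /\ (snd od < n)%nat /\ fst od <> snd od.

Definition at_most_two_routes (n : nat) (L : list (nat * nat)) : Prop :=
  forall a, cycle_arc n a ->
  forall od1 od2 od3 r1 r2 r3,
    In od1 L -> In od2 L -> In od3 L ->
    is_route n od1 r1 -> is_route n od2 r2 -> is_route n od3 r3 ->
    In a (consecutive_arcs r1) -> In a (consecutive_arcs r2) ->
    In a (consecutive_arcs r3) ->
    r1 = r2 \/ r1 = r3 \/ r2 = r3.

(* part i = OD-pair of user i; the pieces I_(o,d) are measurable *)
Definition is_measurable_partition (I : R -> Prop) (L : list (nat * nat))
    (part : R -> nat * nat) : Prop :=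
  (forall i, I i -> In (part i) L) /\
  (forall od, In od L -> lebesgue_measurable (fun i => I i /\ part i = od)).

Definition admissible_costs (n : nat) (I : R -> Prop)
    (c : R -> nat * nat -> R -> R) : Prop :=
  forall a, cycle_arc n a ->
    (forall i, I i ->
       (forall x, 0 <= x -> 0 <= c i a x) /\
       (forall x, 0 <= x -> limit1_in (c i a) (fun y => 0 <= y) (c i a x) x) /\
       (forall x y, 0 <= x -> x < y -> c i a x < c i a y)) /\
    (forall x t, 0 <= x -> lebesgue_measurable (fun i => I i /\ c i a x <= t)).

Definition is_strategy_profile (n : nat) (I : R -> Prop) (part : R -> nat * nat)
    (sigma : R -> list nat) : Prop :=
  (forall i, I i -> is_route n (part i) (sigma i)) /\
  (forall r, lebesgue_measurable (fun i => I i /\ sigma i = r)).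

Definition flow (I : R -> Prop) (sigma : R -> list nat) (a : nat * nat) : R :=
  lebesgue_outer (fun i => I i /\ In a (consecutive_arcs (sigma i))).

Definition route_cost (c : R -> nat * nat -> R -> R) (i : R)
    (f : nat * nat -> R) (p : list nat) : R :=
  fold_right Rplus 0 (map (fun a => c i a (f a)) (consecutive_arcs p)).

Definition is_equilibrium (n : nat) (I : R -> Prop) (part : R -> nat * nat)
    (c : R -> nat * nat -> R -> R) (sigma : R -> list nat) : Prop :=
  is_strategy_profile n I part sigma /\
  forall i, I i -> forall r, is_route n (part i) r ->
    route_cost c i (flow I sigma) (sigma i) <= route_cost c i (flow I sigma) r.

Definition uniqueness_property (n : nat) (L : list (nat * nat)) : Prop :=
  forall (I : R -> Prop), is_bounded_interval I ->
  forall part, is_measurable_partition I L part ->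
  forall c, admissible_costs n I c ->
  forall sigma1 sigma2,
    is_equilibrium n I part c sigma1 -> is_equilibrium n I part c sigma2 ->
    forall a, cycle_arc n a -> flow I sigma1 a = flow I sigma2 a.

(* An OD-pair has exactly
   two routes, one clockwise and one counterclockwise, using complementary
   sets of edges.  Given two equilibria, the [mass_gap] of a route is the
   difference of the masses of its users; the gaps of the two routes of a
   pair are opposite, and the flow difference on an arc is the sum of the
   gaps of the (at most two) routes through it.  Let d be the largest
   absolute gap.  If d = 0 the flows coincide.  Otherwise an exchange
   argument (a user leaving the route of gap d for its sibling) shows that
   the flow is unchanged on every arc of an extremal route, so another route
   through such an arc has the opposite gap.  A combinatorial argument then
   finds three extremal OD-pairs, whose routes cover every arc, so the flow
   is unchanged everywhere. *)

From Stdlib Require Import Reals List Lia Lra Classical ClassicalEpsilon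
  FunctionalExtensionality PropExtensionality.
Import ListNotations.

Section OuterMeasure.

Local Open Scope R_scope.

Lemma outer_ext (A B : R -> Prop) : (forall x, A x <-> B x) ->
  lebesgue_outer A = lebesgue_outer B.
Proof.
  intros H. f_equal. apply functional_extensionality. intros x.
  apply propositional_extensionality. auto.
Qed.

Lemma infinite_sum_nonneg f s : infinite_sum f s -> (forall k, 0 <= f k) -> 0 <= s.
Proof.
  intros Hs Hf. destruct (Rle_or_lt 0 s) as [|Hlt]; auto.
  destruct (Hs (- s)) as [N HN]; [lra|].
  specialize (HN N (le_n N)). unfold R_dist in HN.
  assert (0 <= sum_f_R0 f N) by (apply cond_pos_sum; auto).
  pose proof (Rle_abs (sum_f_R0 f N - s)). lra.
Qed.

Lemma infinite_sum_first f c : f O = c -> (forall k, f (S k) = 0) -> infinite_sum f c.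
Proof.
  intros H0 HS eps He. exists O. intros m _.
  assert (Hm : sum_f_R0 f m = c).
  { induction m as [|m IH]; cbn; [auto|]. rewrite IH, HS. lra. }
  rewrite Hm. unfold R_dist. rewrite Rminus_diag, Rabs_R0. auto.
Qed.

Lemma cover_sum_nonneg A s : interval_cover_sum A s -> 0 <= s.
Proof.
  intros [a [b [Hab [_ Hs]]]]. apply (infinite_sum_nonneg _ _ Hs).
  intros k. specialize (Hab k). lra.
Qed.

(* A bounded set is covered by a single interval, so its cover sums form a
   nonempty set bounded below by 0, whose infimum [lebesgue_outer] picks. *)
Lemma outer_is_glb A : bounded_set A -> is_glb (interval_cover_sum A) (lebesgue_outer A).
Proof.
  intros [M HM]. unfold lebesgue_outer. apply epsilon_spec.
  set (W := Rabs M + 1).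
  assert (Hcover : interval_cover_sum A (2 * W)).
  { exists (fun k => match k with O => - W | _ => 0 end), (fun k => match k with O => W | _ => 0 end).
    unfold W. split; [intros [|k]; pose proof (Rabs_pos M); lra|]. split.
    - intros x Hx. exists O. specialize (HM x Hx).
      pose proof (Rle_abs M). pose proof (Rle_abs x). pose proof (Rle_abs (- x)).
      rewrite Rabs_Ropp in *. lra.
    - apply infinite_sum_first; intros; lra. }
  destruct (completeness (fun x => interval_cover_sum A (- x))) as [m [Hub Hlub]].
  - exists 0. intros x Hx. apply cover_sum_nonneg in Hx. lra.
  - exists (- (2 * W)). rewrite Ropp_involutive. auto.
  - exists (- m). split.
    + intros s Hs. assert (- s <= m) by (apply Hub; rewrite Ropp_involutive; auto). lra.
    + intros m' Hm'. assert (m <= - m') by (apply Hlub; intros x Hx; specialize (Hm' _ Hx); lra).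
      lra.
Qed.

Lemma outer_nonneg A : bounded_set A -> 0 <= lebesgue_outer A.
Proof.
  intros H. apply (outer_is_glb A H). apply cover_sum_nonneg.
Qed.

Lemma outer_empty A : (forall x, ~ A x) -> lebesgue_outer A = 0.
Proof.
  intros H. assert (Hb : bounded_set A) by (exists 0; intros x Hx; destruct (H x Hx)).
  apply Rle_antisym; [|apply outer_nonneg; auto].
  apply (outer_is_glb A Hb).
  exists (fun _ => 0), (fun _ => 0). split; [intros; lra|]. split.
  - intros x Hx. destruct (H x Hx).
  - apply infinite_sum_first; intros; lra.
Qed.

Lemma bounded_subset (A B : R -> Prop) : (forall x, A x -> B x) -> bounded_set B -> bounded_set A.
Proof. intros H [M HM]. exists M. auto. Qed.

Lemma outer_mono E B : lebesgue_measurable E -> bounded_set B -> (forall x, E x -> B x) ->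
  lebesgue_outer E <= lebesgue_outer B.
Proof.
  intros HE Hb Hsub. rewrite (HE B Hb).
  rewrite (outer_ext (fun x => B x /\ E x) E) by (intros x; split; [tauto|auto]).
  pose proof (outer_nonneg (fun x => B x /\ ~ E x)
    (bounded_subset _ B (fun x Hx => proj1 Hx) Hb)). lra.
Qed.

End OuterMeasure.

Section FiniteSums.

Local Open Scope R_scope.

Definition sumR {A : Type} (l : list A) (f : A -> R) : R := fold_right Rplus 0 (map f l).

Lemma sumR_cons {A : Type} (x : A) l f : sumR (x :: l) f = f x + sumR l f.
Proof. reflexivity. Qed.

Lemma sumR_sub {A : Type} (l : list A) f g : sumR l f - sumR l g = sumR l (fun x => f x - g x).
Proof. induction l as [|x l IH]; cbn in *; [lra|]. unfold sumR in *. cbn. rewrite <- IH. lra. Qed.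

Lemma sumR_opp {A : Type} (l : list A) f : sumR l (fun x => - f x) = - sumR l f.
Proof. induction l as [|x l IH]; [cbn; lra|]. rewrite !sumR_cons, IH. lra. Qed.

Lemma sumR_nonneg {A : Type} (l : list A) f : (forall x, In x l -> 0 <= f x) -> 0 <= sumR l f.
Proof.
  induction l as [|x l IH]; intros H; [cbn; lra|]. rewrite sumR_cons.
  pose proof (H x (or_introl eq_refl)). pose proof (IH (fun y Hy => H y (or_intror Hy))). lra.
Qed.

Lemma sumR_nonneg_zero {A : Type} (l : list A) f : (forall x, In x l -> 0 <= f x) ->
  sumR l f <= 0 -> forall x, In x l -> f x = 0.
Proof.
  induction l as [|y l IH]; intros H Hs x Hx; [destruct Hx|]. rewrite sumR_cons in Hs.
  assert (H0 : 0 <= f y) by (apply H; left; auto).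
  assert (H1 : 0 <= sumR l f) by (apply sumR_nonneg; intros; apply H; right; auto).
  destruct Hx as [<-|Hx]; [lra|]. apply IH; auto; [intros; apply H; right; auto|lra].
Qed.

Lemma sumR_zero {A : Type} (l : list A) f : (forall x, In x l -> f x = 0) -> sumR l f = 0.
Proof.
  induction l as [|x l IH]; intros H; [reflexivity|]. rewrite sumR_cons, IH, H; [lra|left; auto|].
  intros; apply H; right; auto.
Qed.

Lemma sumR_sign_squeeze {A : Type} (lp lm : list A) phi :
  (forall x, In x lp -> 0 <= phi x) -> (forall x, In x lm -> phi x <= 0) ->
  sumR lp phi <= sumR lm phi ->
  (forall x, In x lp -> phi x = 0) /\ (forall x, In x lm -> phi x = 0).
Proof.
  intros Hp Hm Hle.
  assert (Sp := sumR_nonneg lp phi Hp).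
  assert (Sm := sumR_nonneg lm (fun x => - phi x) (fun x Hx => Ropp_0_ge_le_contravar _ (Rle_ge _ _ (Hm x Hx)))).
  rewrite sumR_opp in Sm. split.
  - apply sumR_nonneg_zero; auto. lra.
  - intros x Hx. assert (- phi x = 0); [|lra].
    apply (sumR_nonneg_zero lm (fun x => - phi x)); auto.
    + intros y Hy. specialize (Hm y Hy). lra.
    + rewrite sumR_opp. lra.
Qed.

Lemma sum_at_most_two {A : Type} (l : list A) g d x : NoDup l -> (length l <= 2)%nat -> In x l ->
  (forall y, In y l -> Rabs (g y) <= d) ->
  (g x = d -> 0 <= sumR l g) /\ (g x = - d -> sumR l g <= 0) /\
  (sumR l g = 0 -> exists y, In y l /\ g y = - g x).
Proof.
  intros Hnd Hlen Hx Hb.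
  assert (Bound : forall y, In y l -> - d <= g y <= d).
  { intros y Hy. specialize (Hb y Hy). pose proof (Rle_abs (g y)).
    pose proof (Rle_abs (- g y)). rewrite Rabs_Ropp in *. lra. }
  destruct l as [|u [|v [|w l]]]; cbn in Hlen; try lia; [destruct Hx| |].
  - destruct Hx as [->|[]]. assert (Bx := Bound x (or_introl eq_refl)). unfold sumR. cbn.
    split; [intros; lra|]. split; [intros; lra|]. intros S. exists x. split; [left|]; auto; lra.
  - assert (Bu := Bound u (or_introl eq_refl)). assert (Bv := Bound v (or_intror (or_introl eq_refl))).
    unfold sumR. cbn. destruct Hx as [<-|[<-|[]]]; (split; [intros; lra|]); (split; [intros; lra|]); intros S.
    + exists v. split; [right; left|]; auto; lra.
    + exists u. split; [left|]; auto; lra.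
Qed.

Lemma list_max_exists {A : Type} (l : list A) (g : A -> R) : exists M, 0 <= M /\
  (forall x, In x l -> g x <= M) /\ (M = 0 \/ exists x, In x l /\ g x = M).
Proof.
  induction l as [|a l [M [HM0 [HMub HMatt]]]].
  - exists 0. split; [lra|]. split; [intros _ []|auto].
  - exists (Rmax (g a) M). split; [eapply Rle_trans; [apply HM0|apply Rmax_r]|]. split.
    + intros x [<-|Hx]; [apply Rmax_l|]. eapply Rle_trans; [apply HMub; auto|apply Rmax_r].
    + destruct (Rle_dec (g a) M) as [Hle|Hlt].
      * rewrite Rmax_right by auto. destruct HMatt as [|[x [Hx Ex]]]; auto.
        right. exists x. cbn. auto.
      * rewrite Rmax_left by lra. right. exists a. cbn. auto.
Qed.

End FiniteSums.

Section FiberMasses.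

Local Open Scope R_scope.

Lemma outer_fibers_sum {A : Type} (I : R -> Prop) (sg : R -> A) : bounded_set I ->
  (forall r, lebesgue_measurable (fun i => I i /\ sg i = r)) ->
  forall l, NoDup l ->
  lebesgue_outer (fun i => I i /\ In (sg i) l) =
  sumR l (fun r => lebesgue_outer (fun i => I i /\ sg i = r)).
Proof.
  intros Hb Hm l. induction l as [|r l IH]; intros Hnd.
  - apply outer_empty. intros x [_ []].
  - inversion Hnd as [|? ? Hr Hnd']. subst.
    rewrite (Hm r _ (bounded_subset _ I (fun x Hx => proj1 Hx) Hb)), sumR_cons, <- IH by auto.
    f_equal; apply outer_ext; intros x; cbn.
    + intuition.
    + split.
      * intros [[HI [E|E]] N]; [exfalso; apply N; auto|]. auto.
      * intros [HI Hin]. split; [auto|]. intros [_ E]. rewrite E in Hin. auto.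
Qed.

End FiberMasses.

Section CycleGeometry.

Local Open Scope nat_scope.

Variable n : nat.
Hypothesis n_ge3 : 3 <= n.

(* The vertex reached from [v] after [t <= n] clockwise steps; the clockwise
   successor of [u] is [(S u) mod n]. *)
Definition shift (v t : nat) : nat := if v + t <? n then v + t else v + t - n.

Ltac unfold_shift := unfold shift in *; repeat match goal with
  | |- context [?a <? ?b] => destruct (Nat.ltb_spec a b)
  | H : context [?a <? ?b] |- _ => destruct (Nat.ltb_spec a b) end.

Lemma succ_mod u : u < n -> (S u) mod n = if S u =? n then 0 else S u.
Proof.
  intros Hu. destruct (Nat.eqb_spec (S u) n) as [E|E].
  - rewrite E. apply Nat.Div0.mod_same.
  - apply Nat.mod_small. lia.
Qed.

Ltac unfold_succ := repeat match goal with
  | H : ?u < n |- context [(S ?u) mod n] => rewrite (succ_mod u H)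
  | H : ?u < n, H2 : context [(S ?u) mod n] |- _ => rewrite (succ_mod u H) in H2
  end;
  repeat match goal with
  | |- context [?a =? ?b] => destruct (Nat.eqb_spec a b)
  | H : context [?a =? ?b] |- _ => destruct (Nat.eqb_spec a b) end.

Lemma succ_lt u : (S u) mod n < n.
Proof. apply Nat.mod_upper_bound. lia. Qed.

Lemma succ_inj x y : x < n -> y < n -> (S x) mod n = (S y) mod n -> x = y.
Proof. intros. unfold_succ; lia. Qed.

(* Two clockwise steps never return to the start, as the cycle is not a
   digon; this separates clockwise from counterclockwise arcs. *)
Lemma succ_succ_neq x : x < n -> (S ((S x) mod n)) mod n <> x.
Proof.
  intros Hx. pose proof (succ_lt x) as Hs. rewrite (succ_mod _ Hs). unfold_succ; lia.
Qed.

Lemma shift_lt v t : v < n -> t <= n -> shift v t < n.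
Proof. intros. unfold_shift; lia. Qed.

Lemma shift_0 v : v < n -> shift v 0 = v.
Proof. intros. unfold_shift; lia. Qed.

Lemma shift_n v : v < n -> shift v n = v.
Proof. intros. unfold_shift; lia. Qed.

Lemma shift_S v t : v < n -> t < n -> shift v (S t) = (S (shift v t)) mod n.
Proof.
  intros Hv Ht. assert (Hlt : shift v t < n) by (apply shift_lt; lia).
  rewrite (succ_mod _ Hlt). unfold_shift; unfold_succ; lia.
Qed.

Lemma shift_inj v t t' : v < n -> t < n -> t' < n -> shift v t = shift v t' -> t = t'.
Proof. intros. unfold_shift; lia. Qed.

Lemma shift_surj v y : v < n -> y < n -> exists t, t < n /\ shift v t = y.
Proof.
  intros. destruct (Nat.le_gt_cases v y).
  - exists (y - v). split. lia. unfold_shift; lia.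
  - exists (y + n - v). split. lia. unfold_shift; lia.
Qed.

Lemma shift_pred x y : x < n -> y = (S x) mod n -> x = shift y (n - 1).
Proof. intros Hx ->. rewrite succ_mod by auto. unfold_succ; unfold_shift; lia. Qed.

Definition cw_path (o m : nat) : list nat := map (shift o) (seq 0 (S m)).
Definition ccw_path (o m : nat) : list nat := map (fun t => shift o (n - t)) (seq 0 (S m)).

Definition cw_arc (x : nat) : nat * nat := (x, (S x) mod n).
Definition ccw_arc (x : nat) : nat * nat := ((S x) mod n, x).

Lemma arcs_map_seq (g : nat -> nat) a m :
  consecutive_arcs (map g (seq a (S m))) = map (fun t => (g t, g (S t))) (seq a m).
Proof.
  revert a; induction m as [|m IH]; intros a; [reflexivity|].
  change (seq a (S (S m))) with (a :: seq (S a) (S m)).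
  change (seq a (S m)) with (a :: seq (S a) m).
  rewrite !map_cons, <- IH. reflexivity.
Qed.

Lemma arcs_snoc (l : list nat) x z : l <> [] ->
  consecutive_arcs (l ++ [x]) = consecutive_arcs l ++ [(last l z, x)].
Proof.
  induction l as [|a l IH]; intros Hl; [congruence|].
  destruct l as [|b l]; [reflexivity|].
  change ((a :: b :: l) ++ [x]) with (a :: ((b :: l) ++ [x])).
  change (consecutive_arcs (a :: ((b :: l) ++ [x])))
    with ((a, b) :: consecutive_arcs ((b :: l) ++ [x])).
  rewrite IH by congruence. reflexivity.
Qed.

Lemma in_arcs_cw_path o m a : o < n -> m < n ->
  In a (consecutive_arcs (cw_path o m)) <-> exists t, t < m /\ a = cw_arc (shift o t).
Proof.
  intros. unfold cw_path. rewrite arcs_map_seq, in_map_iff. split.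
  - intros [t [<- Ht]]. apply in_seq in Ht. exists t. split; [lia|].
    unfold cw_arc. rewrite shift_S; auto; lia.
  - intros [t [Ht ->]]. exists t. split; [|apply in_seq; lia].
    unfold cw_arc. rewrite shift_S; auto; lia.
Qed.

Lemma in_arcs_ccw_path o m a : o < n -> m <= n ->
  In a (consecutive_arcs (ccw_path o m)) <-> exists u, n - m <= u < n /\ a = ccw_arc (shift o u).
Proof.
  intros. unfold ccw_path. rewrite arcs_map_seq, in_map_iff. split.
  - intros [t [<- Ht]]. apply in_seq in Ht. exists (n - S t). split; [lia|].
    unfold ccw_arc. replace (n - t) with (S (n - S t)) by lia. rewrite shift_S; auto; lia.
  - intros [u [Hu ->]]. exists (n - S u). split; [|apply in_seq; lia].
    unfold ccw_arc. replace (n - (n - S u)) with (S u) by lia.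
    replace (n - S (n - S u)) with u by lia. rewrite shift_S; auto; lia.
Qed.

Lemma in_cw_path o m y : In y (cw_path o m) <-> exists t, t <= m /\ y = shift o t.
Proof.
  unfold cw_path. rewrite in_map_iff.
  split; intros [t [H1 H2]]; exists t; rewrite in_seq in *; split; auto; lia.
Qed.

Lemma in_ccw_path o m y : In y (ccw_path o m) <-> exists t, t <= m /\ y = shift o (n - t).
Proof.
  unfold ccw_path. rewrite in_map_iff.
  split; intros [t [H1 H2]]; exists t; rewrite in_seq in *; split; auto; lia.
Qed.

Lemma cw_path_S o m : cw_path o (S m) = cw_path o m ++ [shift o (S m)].
Proof. unfold cw_path. rewrite (seq_S (S m)), map_app. reflexivity. Qed.

Lemma ccw_path_S o m : ccw_path o (S m) = ccw_path o m ++ [shift o (n - S m)].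
Proof. unfold ccw_path. rewrite (seq_S (S m)), map_app. reflexivity. Qed.

Lemma last_map_seq (g : nat -> nat) m z : last (map g (seq 0 (S m))) z = g m.
Proof. rewrite seq_S, map_app. apply last_last. Qed.

Lemma cw_path_last o m z : last (cw_path o m) z = shift o m.
Proof. apply last_map_seq. Qed.

Lemma ccw_path_last o m z : last (ccw_path o m) z = shift o (n - m).
Proof. apply (last_map_seq (fun t => shift o (n - t))). Qed.

Lemma cw_ccw_arc_neq x y : x < n -> y < n -> cw_arc x <> ccw_arc y.
Proof.
  unfold cw_arc, ccw_arc. intros Hx Hy E. injection E as -> E.
  exact (succ_succ_neq y Hy E).
Qed.

Lemma cycle_arc_cases a : cycle_arc n a -> exists x, x < n /\ (a = cw_arc x \/ a = ccw_arc x).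
Proof.
  destruct a as [u v]. intros [Hu [Hv [E|E]]]; subst.
  - exists u. auto.
  - exists v. auto.
Qed.

Lemma cw_arc_cycle x : x < n -> cycle_arc n (cw_arc x).
Proof. intros. repeat split; auto using succ_lt. Qed.

Lemma ccw_arc_cycle x : x < n -> cycle_arc n (ccw_arc x).
Proof. intros. repeat split; auto using succ_lt. Qed.

Lemma cw_path_is_path o m : o < n -> m < n ->
  hd_error (cw_path o m) = Some o /\ NoDup (cw_path o m) /\
  Forall (cycle_arc n) (consecutive_arcs (cw_path o m)).
Proof.
  intros Ho Hm. split; [|split].
  - cbn. rewrite shift_0; auto.
  - apply NoDup_map_NoDup_ForallPairs; [|apply seq_NoDup].
    intros x y Hx Hy E. apply in_seq in Hx, Hy. apply shift_inj in E; auto; lia.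
  - apply Forall_forall. intros a Ha. apply in_arcs_cw_path in Ha as [t [Ht ->]]; auto.
    apply cw_arc_cycle, shift_lt; lia.
Qed.

Lemma ccw_path_is_path o m : o < n -> m < n ->
  hd_error (ccw_path o m) = Some o /\ NoDup (ccw_path o m) /\
  Forall (cycle_arc n) (consecutive_arcs (ccw_path o m)).
Proof.
  intros Ho Hm. split; [|split].
  - cbn. rewrite Nat.sub_0_r, shift_n; auto.
  - apply NoDup_map_NoDup_ForallPairs; [|apply seq_NoDup].
    intros x y Hx Hy E. apply in_seq in Hx, Hy. unfold_shift; lia.
  - apply Forall_forall. intros a Ha. apply in_arcs_ccw_path in Ha as [t [Ht ->]]; try lia.
    apply ccw_arc_cycle, shift_lt; lia.
Qed.

Lemma cw_path_extend o m x : o < n -> m < n -> ~ In x (cw_path o m) ->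
  cycle_arc n (shift o m, x) ->
  cw_path o m ++ [x] = cw_path o (S m) \/ (m = 0 /\ cw_path o m ++ [x] = ccw_path o 1).
Proof.
  intros Ho Hm Hx [_ [Hxn [Hstep|Hstep]]].
  - left. rewrite cw_path_S, shift_S, Hstep; auto.
  - destruct m as [|m].
    + right. split; [reflexivity|]. unfold cw_path, ccw_path. cbn. rewrite shift_0, Nat.sub_0_r, shift_n; auto.
      rewrite shift_0 in Hstep by auto. rewrite <- (shift_pred x o); auto.
    + exfalso. apply Hx, in_cw_path. exists m. split; [lia|].
      rewrite shift_S in Hstep by lia. apply succ_inj in Hstep; auto. apply shift_lt; lia.
Qed.

Lemma ccw_path_extend o m x : o < n -> m < n -> ~ In x (ccw_path o m) ->
  cycle_arc n (shift o (n - m), x) ->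
  ccw_path o m ++ [x] = ccw_path o (S m) \/ (m = 0 /\ ccw_path o m ++ [x] = cw_path o 1).
Proof.
  intros Ho Hm Hx [_ [Hxn [Hstep|Hstep]]].
  - destruct m as [|m].
    + right. split; [reflexivity|]. unfold cw_path, ccw_path. cbn. rewrite Nat.sub_0_r, shift_n in * by auto.
      rewrite Hstep, shift_S, shift_0 by lia. reflexivity.
    + exfalso. apply Hx, in_ccw_path. exists m. split; [lia|].
      rewrite Hstep. replace (n - m) with (S (n - S m)) by lia. rewrite shift_S; auto; lia.
  - left. rewrite ccw_path_S. do 2 f_equal.
    replace (n - m) with (S (n - S m)) in Hstep by lia. rewrite shift_S in Hstep by lia.
    apply succ_inj in Hstep; auto. apply shift_lt; lia.
Qed.

Lemma nodup_vertices_length (l : list nat) :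
  NoDup l -> (forall y, In y l -> y < n) -> length l <= n.
Proof.
  intros Hnd Hlt. rewrite <- (length_seq n 0). apply NoDup_incl_length; auto.
  intros y Hy. apply in_seq. specialize (Hlt y Hy). lia.
Qed.

Lemma simple_walk o q : o < n -> NoDup (o :: q) ->
  Forall (cycle_arc n) (consecutive_arcs (o :: q)) ->
  length q < n /\ (o :: q = cw_path o (length q) \/ o :: q = ccw_path o (length q)).
Proof.
  intros Ho. induction q as [|x q IH] using rev_ind; intros Hnd Hf.
  - split; [cbn; lia|]. left. cbn. rewrite shift_0; auto.
  - rewrite app_comm_cons in Hnd, Hf.
    rewrite (arcs_snoc (o :: q) x o) in Hf by congruence.
    apply Forall_app in Hf as [Hf Hlast]. apply Forall_inv in Hlast.
    apply NoDup_remove in Hnd as Hnd'. rewrite app_nil_r in Hnd'. destruct Hnd' as [Hnd' Hx].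
    destruct (IH Hnd' Hf) as [Hm Hdir]. clear IH.
    rewrite length_app, Nat.add_1_r, app_comm_cons.
    assert (Hbound : length ((o :: q) ++ [x]) <= n).
    { apply nodup_vertices_length; auto. intros y Hy.
      apply in_app_or in Hy as [Hy|[<-|[]]]; [|apply Hlast].
      destruct Hdir as [E|E]; rewrite E in Hy.
      - apply in_cw_path in Hy as [t [Ht ->]]. apply shift_lt; lia.
      - apply in_ccw_path in Hy as [t [Ht ->]]. apply shift_lt; lia. }
    rewrite length_app in Hbound. cbn in Hbound.
    split; [lia|].
    destruct Hdir as [E|E]; rewrite E in *.
    + rewrite cw_path_last in Hlast.
      destruct (cw_path_extend o (length q) x) as [E'|[Hq E']]; auto.
      right. rewrite E'. apply length_zero_iff_nil in Hq. subst q. reflexivity.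
    + rewrite ccw_path_last in Hlast.
      destruct (ccw_path_extend o (length q) x) as [E'|[Hq E']]; auto.
      left. rewrite E'. apply length_zero_iff_nil in Hq. subst q. reflexivity.
Qed.

Definition valid_pair (k : nat * nat) : Prop := fst k < n /\ snd k < n /\ fst k <> snd k.

Definition cw_dist (o d : nat) : nat := if o <=? d then d - o else d + n - o.

Lemma cw_dist_spec o d : o < n -> d < n -> o <> d ->
  1 <= cw_dist o d < n /\ shift o (cw_dist o d) = d.
Proof. intros. unfold cw_dist. destruct (Nat.leb_spec o d); unfold_shift; lia. Qed.

Definition cw_route (k : nat * nat) : list nat := cw_path (fst k) (cw_dist (fst k) (snd k)).
Definition ccw_route (k : nat * nat) : list nat :=
  ccw_path (fst k) (n - cw_dist (fst k) (snd k)).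

Definition pair_route (k : nat * nat) (r : list nat) : Prop := r = cw_route k \/ r = ccw_route k.

Lemma cw_route_is_route k : valid_pair k -> is_route n k (cw_route k).
Proof.
  destruct k as [o d]. intros [Ho [Hd Hod]]. cbn in *.
  destruct (cw_dist_spec o d) as [Hlen Hend]; auto.
  destruct (cw_path_is_path o (cw_dist o d)) as [Hh [Hnd Hf]]; try lia.
  change (is_route n (o, d) (cw_path o (cw_dist o d))). unfold is_route; cbv beta iota zeta.
  rewrite cw_path_last. auto.
Qed.

Lemma ccw_route_is_route k : valid_pair k -> is_route n k (ccw_route k).
Proof.
  destruct k as [o d]. intros [Ho [Hd Hod]]. cbn in *.
  destruct (cw_dist_spec o d) as [Hlen Hend]; auto.
  destruct (ccw_path_is_path o (n - cw_dist o d)) as [Hh [Hnd Hf]]; try lia.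
  change (is_route n (o, d) (ccw_path o (n - cw_dist o d))). unfold is_route; cbv beta iota zeta.
  rewrite ccw_path_last.
  replace (n - (n - cw_dist o d)) with (cw_dist o d) by lia. auto.
Qed.

Lemma pair_route_is_route k r : valid_pair k -> pair_route k r -> is_route n k r.
Proof. intros Hk [->| ->]; auto using cw_route_is_route, ccw_route_is_route. Qed.

Lemma route_cases k p : valid_pair k -> is_route n k p -> pair_route k p.
Proof.
  destruct k as [o d]. intros [Ho [Hd Hod]] [Hh [Hl [Hnd Hf]]]. cbn in *.
  destruct (cw_dist_spec o d) as [Hlen Hend]; auto.
  destruct p as [|o' q]; [discriminate|]. injection Hh as ->.
  unfold pair_route, cw_route, ccw_route; cbv beta iota zeta delta [fst snd].
  destruct (simple_walk o q Ho Hnd Hf) as [Hq [E|E]]; rewrite E in Hl |- *.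
  - rewrite cw_path_last in Hl. left. f_equal.
    rewrite <- Hend in Hl. apply shift_inj in Hl; auto; lia.
  - rewrite ccw_path_last in Hl. right. f_equal.
    destruct (length q) as [|m].
    + rewrite Nat.sub_0_r, shift_n in Hl; auto. congruence.
    + rewrite <- Hend in Hl. apply shift_inj in Hl; lia.
Qed.

Lemma route_determines_pair od od' p : is_route n od p -> is_route n od' p -> od = od'.
Proof.
  destruct od as [o d], od' as [o' d']. intros [H1 [H2 _]] [H1' [H2' _]].
  rewrite H1 in H1'. injection H1' as <-. congruence.
Qed.

Definition uses_edge (y : nat) (p : list nat) : Prop :=
  In (cw_arc y) (consecutive_arcs p) \/ In (ccw_arc y) (consecutive_arcs p).

Definition cw_segment (o m y : nat) : Prop := exists t, t < m /\ shift o t = y.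

Lemma cw_route_arcs k a : valid_pair k ->
  In a (consecutive_arcs (cw_route k)) <->
  exists y, cw_segment (fst k) (cw_dist (fst k) (snd k)) y /\ a = cw_arc y.
Proof.
  intros [Ho [Hd Hod]]. destruct (cw_dist_spec (fst k) (snd k)) as [Hlen _]; auto.
  unfold cw_route. rewrite in_arcs_cw_path by lia. split.
  - intros [t [Ht ->]]. exists (shift (fst k) t). split; auto. exists t. auto.
  - intros [y [[t [Ht <-]] ->]]. exists t. auto.
Qed.

Lemma ccw_route_arcs k a : valid_pair k ->
  In a (consecutive_arcs (ccw_route k)) <->
  exists y, y < n /\ ~ cw_segment (fst k) (cw_dist (fst k) (snd k)) y /\ a = ccw_arc y.
Proof.
  intros [Ho [Hd Hod]]. destruct (cw_dist_spec (fst k) (snd k)) as [Hlen _]; auto.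
  unfold ccw_route. rewrite in_arcs_ccw_path by lia. split.
  - intros [u [Hu ->]]. exists (shift (fst k) u).
    split; [apply shift_lt; lia|]. split; auto.
    intros [t [Ht Et]]. apply shift_inj in Et; lia.
  - intros [y [Hy [Hseg ->]]]. destruct (shift_surj (fst k) y) as [u [Hu <-]]; auto.
    exists u. split; auto. split; auto.
    destruct (Nat.le_gt_cases (n - (n - cw_dist (fst k) (snd k))) u); auto.
    exfalso. apply Hseg. exists u. split; auto. lia.
Qed.

Lemma cw_route_uses_edge k y : valid_pair k -> y < n ->
  uses_edge y (cw_route k) <-> cw_segment (fst k) (cw_dist (fst k) (snd k)) y.
Proof.
  intros Hk Hy. unfold uses_edge. rewrite !cw_route_arcs by auto. split.
  - intros [[z [Hz E]]|[z [Hz E]]].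
    + unfold cw_arc in E. injection E as <-. auto.
    + exfalso. destruct Hz as [t [Ht Ez]]. apply (cw_ccw_arc_neq z y); auto.
      rewrite <- Ez. destruct Hk as [Ho [Hd Hod]].
      destruct (cw_dist_spec (fst k) (snd k)) as [Hlen _]; auto. apply shift_lt; lia.
  - intros Hseg. left. exists y. auto.
Qed.

Lemma ccw_route_uses_edge k y : valid_pair k -> y < n ->
  uses_edge y (ccw_route k) <-> ~ cw_segment (fst k) (cw_dist (fst k) (snd k)) y.
Proof.
  intros Hk Hy. unfold uses_edge. rewrite !ccw_route_arcs by auto. split.
  - intros [[z [Hz [_ E]]]|[z [Hz [Hseg E]]]].
    + exfalso. exact (cw_ccw_arc_neq y z Hy Hz E).
    + unfold ccw_arc in E. injection E as _ E. subst. auto.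
  - intros Hseg. right. exists y. auto.
Qed.

Lemma uses_edge_exactly_one k y : valid_pair k -> y < n ->
  uses_edge y (cw_route k) <-> ~ uses_edge y (ccw_route k).
Proof.
  intros Hk Hy. rewrite cw_route_uses_edge, ccw_route_uses_edge by auto.
  split; [tauto|apply NNPP].
Qed.

Lemma cw_ccw_routes_arc_disjoint k j b : valid_pair k -> valid_pair j ->
  In b (consecutive_arcs (cw_route k)) -> ~ In b (consecutive_arcs (ccw_route j)).
Proof.
  intros Hk Hj Hcw Hccw. apply cw_route_arcs in Hcw as [y [Hseg ->]]; auto.
  apply ccw_route_arcs in Hccw as [z [Hz [_ E]]]; auto.
  destruct Hseg as [t [Ht <-]]. destruct Hk as [Ho [Hd Hod]].
  destruct (cw_dist_spec (fst k) (snd k)) as [Hlen _]; auto.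
  apply (cw_ccw_arc_neq (shift (fst k) t) z); auto. apply shift_lt; lia.
Qed.

Lemma cw_ccw_route_neq k : valid_pair k -> cw_route k <> ccw_route k.
Proof.
  intros Hk E. assert (Hk' := Hk). destruct Hk' as [Ho [Hd Hod]].
  destruct (cw_dist_spec (fst k) (snd k)) as [Hlen _]; auto.
  apply (cw_ccw_routes_arc_disjoint k k (cw_arc (fst k))); auto; [|rewrite <- E];
    apply cw_route_arcs; auto; exists (fst k); split; auto; exists 0; split; auto using shift_0; lia.
Qed.

Lemma pair_route_has_arc k r : valid_pair k -> pair_route k r ->
  exists b, In b (consecutive_arcs r).
Proof.
  intros Hk Hr. apply pair_route_is_route in Hr; auto.
  destruct k as [o d]. destruct Hk as [_ [_ Hod]], Hr as [Hh [Hl _]]. cbn in *.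
  destruct r as [|x [|y q]]; cbn in *; try discriminate.
  - injection Hh as ->. congruence.
  - exists (x, y). auto.
Qed.

Lemma cw_segments_differ o o' m m' : o < n -> o' < n -> 1 <= m < n -> 1 <= m' < n ->
  o <> o' \/ m <> m' ->
  exists y, y < n /\ ((cw_segment o m y /\ ~ cw_segment o' m' y) \/
                     (cw_segment o' m' y /\ ~ cw_segment o m y)).
Proof.
  intros Ho Ho' Hm Hm' Hne. destruct (Nat.eq_dec o o') as [<-|Hoo].
  - destruct Hne as [Hne|Hne]; [congruence|].
    destruct (Nat.lt_ge_cases m m').
    + exists (shift o m). split; [apply shift_lt; lia|]. right. split; [exists m; auto|].
      intros [t [Ht Et]]. apply shift_inj in Et; lia.
    + exists (shift o m'). split; [apply shift_lt; lia|]. left. split; [exists m'; split; auto; lia|].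
      intros [t [Ht Et]]. apply shift_inj in Et; lia.
  - destruct (classic (cw_segment o' m' o)) as [[t1 [Ht1 Et1]]|Hc].
    + assert (t1 <> 0) by (intros ->; rewrite shift_0 in Et1; auto).
      exists (shift o' (t1 - 1)). split; [apply shift_lt; lia|]. right. split.
      * exists (t1 - 1). split; auto; lia.
      * intros [t [Ht Et]]. assert (Hp : shift o' (t1 - 1) = shift o (n - 1)) by (subst o; unfold_shift; lia).
        rewrite Hp in Et. apply shift_inj in Et; lia.
    + exists o. split; auto. left. split; auto. exists 0. split; [lia|apply shift_0; auto].
Qed.

Lemma routes_sharing_arc k j r s b : valid_pair k -> valid_pair j ->
  pair_route k r -> pair_route j s -> r <> s ->
  In b (consecutive_arcs r) -> In b (consecutive_arcs s) ->
  k <> j /\ exists y, y < n /\ ((uses_edge y r /\ ~ uses_edge y s) \/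
                               (uses_edge y s /\ ~ uses_edge y r)).
Proof.
  intros Hk Hj Hr Hs Hrs Hbr Hbs.
  assert (Hkj : k <> j).
  { intros <-. destruct Hr as [->| ->], Hs as [->| ->]; try congruence.
    - exact (cw_ccw_routes_arc_disjoint k k b Hk Hk Hbr Hbs).
    - exact (cw_ccw_routes_arc_disjoint k k b Hk Hk Hbs Hbr). }
  split; auto.
  assert (Hk' := Hk). assert (Hj' := Hj).
  destruct k as [o d], j as [o' d'], Hk' as [Ho [Hd Hod]], Hj' as [Ho' [Hd' Hod']]. cbn in *.
  destruct (cw_dist_spec o d) as [Hl Hend]; auto.
  destruct (cw_dist_spec o' d') as [Hl' Hend']; auto.
  assert (Hne : o <> o' \/ cw_dist o d <> cw_dist o' d').
  { destruct (Nat.eq_dec o o') as [<-|]; auto. right. intros E. apply Hkj.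
    rewrite <- Hend, <- Hend', E. reflexivity. }
  destruct (cw_segments_differ o o' (cw_dist o d) (cw_dist o' d')) as [y [Hy Hdiff]]; auto.
  exists y. split; auto.
  destruct Hr as [->| ->], Hs as [->| ->].
  - rewrite !cw_route_uses_edge by auto. exact Hdiff.
  - exfalso. exact (cw_ccw_routes_arc_disjoint _ _ b Hk Hj Hbr Hbs).
  - exfalso. exact (cw_ccw_routes_arc_disjoint _ _ b Hj Hk Hbs Hbr).
  - rewrite !ccw_route_uses_edge by auto. tauto.
Qed.

Lemma pair_route_unique k j r : valid_pair k -> valid_pair j ->
  pair_route k r -> pair_route j r -> k = j.
Proof.
  intros Hk Hj Hr Hr'. apply (route_determines_pair k j r); apply pair_route_is_route; auto.
Qed.

Lemma pair_routes_sharing_arc k r m b : valid_pair k -> pair_route k r -> pair_route k m ->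
  In b (consecutive_arcs r) -> In b (consecutive_arcs m) -> r = m.
Proof.
  intros Hk [->| ->] [->| ->] Hr Hm; auto; exfalso;
    eapply cw_ccw_routes_arc_disjoint; eauto.
Qed.

Lemma pair_route_using_edge k y : valid_pair k -> y < n ->
  exists u, pair_route k u /\ uses_edge y u.
Proof.
  intros Hk Hy. destruct (classic (uses_edge y (cw_route k))) as [H|H].
  - exists (cw_route k). split; [left|]; auto.
  - exists (ccw_route k). split; [right; auto|]. apply NNPP. intros H'.
    apply H, uses_edge_exactly_one; auto.
Qed.

Lemma route_arc_cycle k p b : is_route n k p -> In b (consecutive_arcs p) -> cycle_arc n b.
Proof.
  destruct k as [o d]. intros [_ [_ [_ Hf]]] Hb. exact (proj1 (Forall_forall _ _) Hf b Hb).
Qed.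

Lemma uses_edge_reverse_arc x p a : a = cw_arc x \/ a = ccw_arc x -> uses_edge x p ->
  ~ In a (consecutive_arcs p) -> In (snd a, fst a) (consecutive_arcs p).
Proof. unfold uses_edge. intros [->| ->]; cbn; tauto. Qed.

Lemma cycle_arc_reverse a : cycle_arc n a -> cycle_arc n (snd a, fst a).
Proof. destruct a as [u v]. unfold cycle_arc. cbn. tauto. Qed.

Section DemandRoutes.

Variable L : list (nat * nat).
Hypothesis demand : is_demand n L.

Lemma demand_valid k : In k L -> valid_pair k.
Proof. intros Hk. apply (proj2 demand k Hk). Qed.

Definition all_routes : list (list nat) := flat_map (fun k => [cw_route k; ccw_route k]) L.

Lemma in_all_routes r : In r all_routes <-> exists k, In k L /\ pair_route k r.
Proof.
  unfold all_routes, pair_route. rewrite in_flat_map. cbn.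
  split; intros [k [Hk Hr]]; exists k; intuition.
Qed.

Lemma route_in_all_routes k p : In k L -> is_route n k p -> In p all_routes.
Proof.
  intros Hk Hp. apply in_all_routes. exists k. split; auto.
  apply route_cases; auto using demand_valid.
Qed.

Definition arc_eq_dec (a b : nat * nat) : {a = b} + {a <> b}.
Proof. decide equality; apply Nat.eq_dec. Defined.

Definition routes_through (a : nat * nat) : list (list nat) :=
  nodup (list_eq_dec Nat.eq_dec)
    (filter (fun r => if in_dec arc_eq_dec a (consecutive_arcs r) then true else false)
       all_routes).

Lemma in_routes_through a r :
  In r (routes_through a) <-> In r all_routes /\ In a (consecutive_arcs r).
Proof.
  unfold routes_through. rewrite nodup_In, filter_In.
  destruct (in_dec arc_eq_dec a (consecutive_arcs r)); intuition discriminate.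
Qed.

Hypothesis two_routes : at_most_two_routes n L.

Lemma no_three_routes_on_arc b r1 r2 r3 : cycle_arc n b ->
  In r1 all_routes -> In r2 all_routes -> In r3 all_routes ->
  In b (consecutive_arcs r1) -> In b (consecutive_arcs r2) -> In b (consecutive_arcs r3) ->
  r1 <> r2 -> r1 <> r3 -> r2 <> r3 -> False.
Proof.
  intros Hb H1 H2 H3 B1 B2 B3 N12 N13 N23.
  apply in_all_routes in H1 as [k1 [K1 R1]], H2 as [k2 [K2 R2]], H3 as [k3 [K3 R3]].
  apply pair_route_is_route in R1, R2, R3; auto using demand_valid.
  destruct (two_routes b Hb k1 k2 k3 r1 r2 r3) as [|[|]]; auto.
Qed.

Lemma routes_through_length a : cycle_arc n a -> (length (routes_through a) <= 2)%nat.
Proof.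
  intros Ha. assert (Hnd : NoDup (routes_through a)) by apply NoDup_nodup.
  assert (Hin := fun r => proj1 (in_routes_through a r)).
  destruct (routes_through a) as [|r1 [|r2 [|r3 l]]]; cbn; try lia. exfalso.
  inversion Hnd as [|? ? N1 Hnd1]. inversion Hnd1 as [|? ? N2 _].
  destruct (Hin r1) as [A1 B1]; [cbn; auto|].
  destruct (Hin r2) as [A2 B2]; [cbn; auto|].
  destruct (Hin r3) as [A3 B3]; [cbn; auto|].
  apply (no_three_routes_on_arc a r1 r2 r3); auto; intros E; subst; cbn in *; tauto.
Qed.

Section ExtremalCover.

Local Open Scope R_scope.

Variable g : list nat -> R.
Variable d : R.
Hypothesis d_pos : 0 < d.
Hypothesis weight_antisym : forall k, In k L -> g (ccw_route k) = - g (cw_route k).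
Hypothesis opposite_partner : forall r b, In r all_routes -> Rabs (g r) = d ->
  In b (consecutive_arcs r) ->
  exists s, In s all_routes /\ In b (consecutive_arcs s) /\ g s = - g r.

Definition extremal_route (r : list nat) : Prop := In r all_routes /\ Rabs (g r) = d.
Definition extremal_pair (k : nat * nat) : Prop := In k L /\ Rabs (g (cw_route k)) = d.

(* Extremality is a property of the pair: its two routes have opposite weights. *)
Lemma extremal_pair_route k r : extremal_pair k -> pair_route k r -> extremal_route r.
Proof.
  intros [Hk Hd] Hr. split; [apply in_all_routes; eauto|].
  destruct Hr as [->| ->]; auto. rewrite weight_antisym, Rabs_Ropp; auto.
Qed.

Lemma extremal_route_pair k r : In k L -> pair_route k r -> Rabs (g r) = d -> extremal_pair k.
Proof.
  intros Hk [->| ->] Hd; split; auto. rewrite weight_antisym, Rabs_Ropp in Hd; auto.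
Qed.

Lemma sibling_weight j s m : In j L -> pair_route j s -> pair_route j m -> s <> m ->
  g m = - g s.
Proof.
  intros Hj [->| ->] [->| ->] Hsm; try congruence; rewrite weight_antisym; auto; lra.
Qed.

(* Three extremal pairs cover every arc: at each edge each of them has a
   route through it, and no arc carries all three routes. *)
Lemma three_extremal_pairs_cover k1 k2 k3 :
  extremal_pair k1 -> extremal_pair k2 -> extremal_pair k3 ->
  k1 <> k2 -> k1 <> k3 -> k2 <> k3 ->
  forall a, cycle_arc n a -> exists r, extremal_route r /\ In a (consecutive_arcs r).
Proof.
  intros M1 M2 M3 N12 N13 N23 a Ha.
  destruct (cycle_arc_cases a Ha) as [x [Hx Hax]].
  assert (V1 := demand_valid k1 (proj1 M1)).
  assert (V2 := demand_valid k2 (proj1 M2)).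
  assert (V3 := demand_valid k3 (proj1 M3)).
  destruct (pair_route_using_edge k1 x V1 Hx) as [u1 [Hu1 U1]].
  destruct (pair_route_using_edge k2 x V2 Hx) as [u2 [Hu2 U2]].
  destruct (pair_route_using_edge k3 x V3 Hx) as [u3 [Hu3 U3]].
  assert (E1 := extremal_pair_route k1 u1 M1 Hu1).
  assert (E2 := extremal_pair_route k2 u2 M2 Hu2).
  assert (E3 := extremal_pair_route k3 u3 M3 Hu3).
  destruct (classic (In a (consecutive_arcs u1))) as [A1|A1]; [eauto|].
  destruct (classic (In a (consecutive_arcs u2))) as [A2|A2]; [eauto|].
  destruct (classic (In a (consecutive_arcs u3))) as [A3|A3]; [eauto|].
  exfalso. apply (no_three_routes_on_arc (snd a, fst a) u1 u2 u3);
    try apply E1; try apply E2; try apply E3;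
    try (apply (uses_edge_reverse_arc x); assumption); auto using cycle_arc_reverse.
  - intros <-. exact (N12 (pair_route_unique k1 k2 u1 V1 V2 Hu1 Hu2)).
  - intros <-. exact (N13 (pair_route_unique k1 k3 u1 V1 V3 Hu1 Hu3)).
  - intros <-. exact (N23 (pair_route_unique k2 k3 u2 V2 V3 Hu2 Hu3)).
Qed.

(* Two extremal routes of opposite weight, one using an edge [y] the other
   avoids, force a third extremal pair: the partner of the first route on
   its arc at [y]. *)
Lemma third_extremal_pair k j r s y : In k L -> In j L -> k <> j ->
  pair_route k r -> pair_route j s -> Rabs (g r) = d -> g s = - g r ->
  (y < n)%nat -> uses_edge y r -> ~ uses_edge y s ->
  exists k', extremal_pair k' /\ k' <> k /\ k' <> j.
Proof.
  intros Hk Hj Hkj Hr Hs Hgr Hgs Hy Ur Us.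
  assert (Hr_all : In r all_routes) by (apply in_all_routes; eauto).
  assert (Hr0 : g r <> 0) by (intros E; rewrite E, Rabs_R0 in Hgr; lra).
  assert (Hb : exists b, In b (consecutive_arcs r) /\ (b = cw_arc y \/ b = ccw_arc y))
    by (destruct Ur; eauto).
  destruct Hb as [b [Hbr Hby]].
  destruct (opposite_partner r b Hr_all Hgr Hbr) as [m [Hm [Hbm Hgm]]].
  apply in_all_routes in Hm as [k' [Hk' Hm]].
  exists k'. split; [apply (extremal_route_pair k' m); auto; rewrite Hgm, Rabs_Ropp; auto|].
  split; intros ->.
  - assert (r = m) by (apply (pair_routes_sharing_arc k r m b); auto using demand_valid).
    subst m. lra.
  - destruct (list_eq_dec Nat.eq_dec s m) as [<-|Hsm].
    + apply Us. unfold uses_edge. destruct Hby as [<-| <-]; auto.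
    + pose proof (sibling_weight j s m Hj Hs Hm Hsm). lra.
Qed.

Lemma extremal_routes_cover r0 : extremal_route r0 ->
  forall a, cycle_arc n a -> exists r, extremal_route r /\ In a (consecutive_arcs r).
Proof.
  intros [Hr0 Hg0]. apply in_all_routes in Hr0 as Hk.
  destruct Hk as [k [Hk Hrk]].
  destruct (pair_route_has_arc k r0) as [a0 Ha0]; auto using demand_valid.
  destruct (opposite_partner r0 a0 Hr0 Hg0 Ha0) as [s0 [Hs0 [Has0 Hgs0]]].
  apply in_all_routes in Hs0 as [j [Hj Hsj]].
  assert (Hne : r0 <> s0).
  { intros <-. assert (Hz : g r0 = 0) by lra. rewrite Hz, Rabs_R0 in Hg0. lra. }
  destruct (routes_sharing_arc k j r0 s0 a0) as [Hkj [y [Hy Hdiff]]]; auto using demand_valid.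
  assert (Mk : extremal_pair k) by (apply (extremal_route_pair k r0); auto).
  assert (Mj : extremal_pair j).
  { apply (extremal_route_pair j s0); auto. rewrite Hgs0, Rabs_Ropp. auto. }
  destruct Hdiff as [[U1 U2]|[U1 U2]].
  - destruct (third_extremal_pair k j r0 s0 y) as [k' [M' [N1 N2]]]; auto.
    apply (three_extremal_pairs_cover k j k'); auto.
  - destruct (third_extremal_pair j k s0 r0 y) as [k' [M' [N1 N2]]]; auto.
    + rewrite Hgs0, Rabs_Ropp. auto.
    + lra.
    + apply (three_extremal_pairs_cover k j k'); auto.
Qed.

End ExtremalCover.

End DemandRoutes.
End CycleGeometry.

Section EquilibriumCosts.

Local Open Scope R_scope.

Lemma route_cost_diff (c : R -> nat * nat -> R -> R) i f g p :
  route_cost c i f p - route_cost c i g p =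
  sumR (consecutive_arcs p) (fun b => c i b (f b) - c i b (g b)).
Proof. apply sumR_sub. Qed.

Lemma equilibrium_exchange n I part c s1 s2 i :
  is_equilibrium n I part c s1 -> is_equilibrium n I part c s2 -> I i ->
  sumR (consecutive_arcs (s1 i)) (fun b => c i b (flow I s1 b) - c i b (flow I s2 b)) <=
  sumR (consecutive_arcs (s2 i)) (fun b => c i b (flow I s1 b) - c i b (flow I s2 b)).
Proof.
  intros [[R1 _] Opt1] [[R2 _] Opt2] Hi. rewrite <- !route_cost_diff.
  pose proof (Opt1 i Hi (s2 i) (R2 i Hi)). pose proof (Opt2 i Hi (s1 i) (R1 i Hi)). lra.
Qed.

Lemma cost_change_sign n I c i b x y : admissible_costs n I c -> I i -> cycle_arc n b ->
  0 <= x -> 0 <= y ->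
  (y <= x -> 0 <= c i b x - c i b y) /\ (c i b x - c i b y = 0 -> x = y).
Proof.
  intros Hc Hi Hb Hx Hy. destruct (proj1 (Hc b Hb) i Hi) as [_ [_ Hmon]]. split.
  - intros Hle. destruct (Req_dec x y) as [->|Hne]; [lra|].
    assert (c i b y < c i b x) by (apply Hmon; lra). lra.
  - intros E. destruct (Rtotal_order x y) as [Hl|[He|Hl]]; auto.
    + assert (c i b x < c i b y) by (apply Hmon; lra). lra.
    + assert (c i b y < c i b x) by (apply Hmon; lra). lra.
Qed.

Lemma flow_nonneg I sg b : bounded_set I -> 0 <= flow I sg b.
Proof. intros Hb. apply outer_nonneg. apply (bounded_subset _ I); tauto. Qed.

End EquilibriumCosts.

Section Equilibria.

Local Open Scope R_scope.

Variable n : nat.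
Hypothesis n_ge3 : (3 <= n)%nat.
Variable L : list (nat * nat).
Hypothesis demand : is_demand n L.
Variable I : R -> Prop.
Hypothesis I_bounded : bounded_set I.
Variable part : R -> nat * nat.
Hypothesis partition : is_measurable_partition I L part.

Definition route_mass (sg : R -> list nat) (r : list nat) : R :=
  lebesgue_outer (fun i => I i /\ sg i = r).

Lemma profile_routes sg : is_strategy_profile n I part sg ->
  forall i, I i -> In (sg i) (all_routes n L).
Proof.
  intros [Hr _] i Hi. apply (route_in_all_routes n n_ge3 L demand (part i)); auto.
  apply partition; auto.
Qed.

Lemma flow_decomposition sg a : is_strategy_profile n I part sg ->
  flow I sg a = sumR (routes_through n L a) (route_mass sg).
Proof.
  intros Hsg. unfold flow, route_mass.
  rewrite <- (outer_fibers_sum I sg I_bounded (proj2 Hsg)) by apply NoDup_nodup.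
  apply outer_ext. intros i. rewrite in_routes_through. split.
  - intros [Hi Ha]. split; auto. split; auto. apply (profile_routes sg Hsg i Hi).
  - intros [Hi [_ Ha]]. auto.
Qed.

Lemma pair_mass sg k : is_strategy_profile n I part sg -> In k L ->
  lebesgue_outer (fun i => I i /\ part i = k) =
  route_mass sg (cw_route n k) + route_mass sg (ccw_route n k).
Proof.
  intros Hsg Hk. assert (Hv := demand_valid n L demand k Hk).
  assert (Hnd : NoDup [cw_route n k; ccw_route n k]).
  { constructor; [intros [E|[]]; exact (cw_ccw_route_neq n n_ge3 k Hv (eq_sym E))|].
    constructor; [intros []|constructor]. }
  replace (route_mass sg (cw_route n k) + route_mass sg (ccw_route n k))
    with (sumR [cw_route n k; ccw_route n k] (route_mass sg)) by (unfold sumR; cbn; lra).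
  unfold route_mass. rewrite <- (outer_fibers_sum I sg I_bounded (proj2 Hsg)) by auto.
  apply outer_ext. intros i. destruct Hsg as [Hr _]. split.
  - intros [Hi <-]. split; auto. assert (Hpi := proj1 partition i Hi).
    destruct (route_cases n n_ge3 (part i) (sg i)) as [E|E]; auto using demand_valid; cbn; auto.
  - intros [Hi Hin]. split; auto.
    apply (route_determines_pair n (part i) k (sg i)); auto.
    apply pair_route_is_route; auto. destruct Hin as [E|[E|[]]]; [left|right]; auto.
Qed.

Variable c : R -> nat * nat -> R -> R.
Hypothesis costs : admissible_costs n I c.
Variables s1 s2 : R -> list nat.
Hypothesis eq1 : is_equilibrium n I part c s1.
Hypothesis eq2 : is_equilibrium n I part c s2.

Definition mass_gap (r : list nat) : R := route_mass s1 r - route_mass s2 r.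

(* Both equilibria split the same users of a pair between its two routes. *)
Lemma mass_gap_antisym k : In k L -> mass_gap (ccw_route n k) = - mass_gap (cw_route n k).
Proof.
  intros Hk. unfold mass_gap.
  pose proof (pair_mass s1 k (proj1 eq1) Hk). pose proof (pair_mass s2 k (proj1 eq2) Hk). lra.
Qed.

Lemma flow_gap a : flow I s1 a - flow I s2 a = sumR (routes_through n L a) mass_gap.
Proof.
  rewrite (flow_decomposition s1), (flow_decomposition s2) by (apply eq1 || apply eq2).
  apply sumR_sub.
Qed.

Lemma flows_equal_of_zero_gaps a : (forall r, In r (all_routes n L) -> mass_gap r = 0) ->
  flow I s1 a = flow I s2 a.
Proof.
  intros Hz. assert (flow I s1 a - flow I s2 a = 0); [|lra].
  rewrite flow_gap. apply sumR_zero. intros r Hr. apply Hz, (proj1 (in_routes_through n L a r) Hr).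
Qed.

Hypothesis two_routes : at_most_two_routes n L.

Variable d : R.
Hypothesis gap_bound : forall r, In r (all_routes n L) -> Rabs (mass_gap r) <= d.

Lemma arc_flow_gap r b : cycle_arc n b -> In r (all_routes n L) -> In b (consecutive_arcs r) ->
  (mass_gap r = d -> 0 <= flow I s1 b - flow I s2 b) /\
  (mass_gap r = - d -> flow I s1 b - flow I s2 b <= 0) /\
  (flow I s1 b = flow I s2 b -> exists s, In s (all_routes n L) /\
     In b (consecutive_arcs s) /\ mass_gap s = - mass_gap r).
Proof.
  intros Hb Hr Hbr. pose proof (flow_gap b) as Hfg.
  destruct (sum_at_most_two (routes_through n L b) mass_gap d r) as [Hpos [Hneg Hzero]].
  - apply NoDup_nodup.
  - apply routes_through_length; auto.
  - apply in_routes_through; auto.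
  - intros y Hy. apply gap_bound. apply in_routes_through in Hy. tauto.
  - split; [|split]; [intros; rewrite Hfg; auto..|]. intros Heq.
    destruct Hzero as [s [Hs Es]]; [lra|]. apply in_routes_through in Hs. exists s. tauto.
Qed.

Lemma deserting_user r : 0 < mass_gap r -> exists i, I i /\ s1 i = r /\ s2 i <> r.
Proof.
  intros Hgap. apply NNPP. intros Hnone.
  assert (route_mass s1 r <= route_mass s2 r); [|unfold mass_gap in Hgap; lra].
  apply outer_mono; [apply (proj2 (proj1 eq1))|apply (bounded_subset _ I); tauto|].
  intros i [Hi Ei]. split; auto. apply NNPP. intros N. apply Hnone. eauto.
Qed.

Lemma user_switching_pair_routes k rp rm : In k L -> pair_route n k rp -> pair_route n k rm ->
  rp <> rm -> 0 < mass_gap rp -> exists i, I i /\ s1 i = rp /\ s2 i = rm.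
Proof.
  intros Hk Hrp Hrm Hne Hgap. assert (Hv := demand_valid n L demand k Hk).
  destruct (deserting_user rp Hgap) as [i [Hi [E1 E2]]]. exists i. split; [|split]; auto.
  assert (Hpart : part i = k).
  { apply (route_determines_pair n (part i) k rp); [rewrite <- E1; apply eq1; auto|].
    apply pair_route_is_route; auto. }
  assert (Hs2 : is_route n k (s2 i)) by (rewrite <- Hpart; apply eq2; auto).
  destruct (route_cases n n_ge3 k (s2 i) Hv Hs2) as [E|E];
    destruct Hrp as [->| ->], Hrm as [->| ->]; congruence.
Qed.

(* The key exchange argument: if the route [rp] of a pair has the largest
   gap [d > 0], a user switching from [rp] to its sibling [rm] sees, along
   [rp], costs that can only increase and, along [rm], costs that can only
   decrease; equilibrium forces all these changes, hence the flow changes,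
   to vanish. *)
Lemma extremal_pair_balanced k rp rm : In k L -> pair_route n k rp -> pair_route n k rm ->
  rp <> rm -> 0 < d -> mass_gap rp = d ->
  forall b, In b (consecutive_arcs rp) \/ In b (consecutive_arcs rm) -> flow I s1 b = flow I s2 b.
Proof.
  intros Hk Hrp Hrm Hne Hd Hgp.
  assert (Hv := demand_valid n L demand k Hk).
  assert (Hgm : mass_gap rm = - d)
    by (destruct Hrp as [->| ->], Hrm as [->| ->]; try congruence;
        rewrite ?mass_gap_antisym in *; auto; lra).
  destruct (user_switching_pair_routes k rp rm) as [i [Hi [E1 E2]]]; auto; [lra|].
  assert (Hcyc : forall r b, pair_route n k r -> In b (consecutive_arcs r) -> cycle_arc n b).
  { intros r b Hr Hb. exact (route_arc_cycle n k r b (pair_route_is_route n n_ge3 k r Hv Hr) Hb). }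
  assert (Hall : forall r, pair_route n k r -> In r (all_routes n L))
    by (intros r Hr; apply in_all_routes; eauto).
  set (phi := fun b => c i b (flow I s1 b) - c i b (flow I s2 b)).
  assert (Hsign : forall b, cycle_arc n b ->
    (flow I s2 b <= flow I s1 b -> 0 <= phi b) /\ (flow I s1 b <= flow I s2 b -> phi b <= 0) /\
    (phi b = 0 -> flow I s1 b = flow I s2 b)).
  { intros b Hb. unfold phi.
    destruct (cost_change_sign n I c i b (flow I s1 b) (flow I s2 b)) as [Hup Hz];
      auto using flow_nonneg.
    destruct (cost_change_sign n I c i b (flow I s2 b) (flow I s1 b)) as [Hdown _];
      auto using flow_nonneg.
    split; [|split]; auto. intros Hle. specialize (Hdown Hle). lra. }
  destruct (sumR_sign_squeeze (consecutive_arcs rp) (consecutive_arcs rm) phi) as [Zp Zm].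
  - intros b Hb. apply (Hsign b (Hcyc rp b Hrp Hb)).
    apply (arc_flow_gap rp b) in Hgp; eauto. lra.
  - intros b Hb. apply (Hsign b (Hcyc rm b Hrm Hb)).
    apply (arc_flow_gap rm b) in Hgm; eauto. lra.
  - unfold phi. rewrite <- E1, <- E2. apply (equilibrium_exchange n I part c s1 s2 i); auto.
  - intros b [Hb|Hb]; apply (Hsign b); eauto.
Qed.

Lemma extremal_route_balanced r : 0 < d -> In r (all_routes n L) -> Rabs (mass_gap r) = d ->
  forall b, In b (consecutive_arcs r) -> flow I s1 b = flow I s2 b.
Proof.
  intros Hd Hr Habs b Hb. apply in_all_routes in Hr as [k [Hk Hrk]].
  assert (Hne := cw_ccw_route_neq n n_ge3 k (demand_valid n L demand k Hk)).
  assert (Hanti := mass_gap_antisym k Hk).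
  assert (Hcase : mass_gap r = d \/ mass_gap r = - d)
    by (unfold Rabs in Habs; destruct (Rcase_abs (mass_gap r)); lra).
  destruct Hrk as [->| ->], Hcase as [Hg|Hg].
  - apply (extremal_pair_balanced k (cw_route n k) (ccw_route n k)); unfold pair_route; auto.
  - apply (extremal_pair_balanced k (ccw_route n k) (cw_route n k)); unfold pair_route; auto. lra.
  - apply (extremal_pair_balanced k (ccw_route n k) (cw_route n k)); unfold pair_route; auto.
  - apply (extremal_pair_balanced k (cw_route n k) (ccw_route n k)); unfold pair_route; auto. lra.
Qed.

Lemma extremal_opposite_partner r b : 0 < d -> In r (all_routes n L) -> Rabs (mass_gap r) = d ->
  In b (consecutive_arcs r) ->
  exists s, In s (all_routes n L) /\ In b (consecutive_arcs s) /\ mass_gap s = - mass_gap r.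
Proof.
  intros Hd Hr Habs Hb. apply in_all_routes in Hr as Hk. destruct Hk as [k [Hk Hrk]].
  assert (Hcyc : cycle_arc n b).
  { apply (route_arc_cycle n k r); auto.
    apply pair_route_is_route; auto. apply (demand_valid n L demand k Hk). }
  apply (arc_flow_gap r b Hcyc Hr Hb). apply (extremal_route_balanced r); auto.
Qed.

End Equilibria.

Theorem proposition1 (n : nat) (L : list (nat * nat)) :
  (3 <= n)%nat -> is_demand n L -> at_most_two_routes n L ->
  uniqueness_property n L.
Proof.
  intros Hn Hdem Htwo I HI part Hpart c Hc s1 s2 E1 E2 a Ha.
  assert (Hb : bounded_set I) by apply HI.
  set (gap := mass_gap I s1 s2).
  destruct (list_max_exists (all_routes n L) (fun r => Rabs (gap r))) as [d [Hd0 [Hbound Hatt]]].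
  destruct (Req_dec d 0) as [->|Hd].
  -
    apply (flows_equal_of_zero_gaps n Hn L Hdem I Hb part Hpart c s1 s2 E1 E2 a).
    intros r Hr. specialize (Hbound r Hr). cbn in Hbound.
    destruct (Req_dec (gap r) 0) as [|Hnz]; auto. pose proof (Rabs_pos_lt _ Hnz). lra.
  - destruct Hatt as [Hz|[r0 [Hr0 Hr0d]]]; [contradiction|].
    assert (Hdpos : (0 < d)%R) by lra.
    (* [a] lies on an extremal route, along which flows are unchanged. *)
    destruct (extremal_routes_cover n Hn L Hdem Htwo gap d Hdpos
                (mass_gap_antisym n Hn L Hdem I Hb part Hpart c s1 s2 E1 E2)
                (fun r b => extremal_opposite_partner n Hn L Hdem I Hb part Hpart c Hc
                              s1 s2 E1 E2 Htwo d Hbound r b Hdpos)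
                r0 (conj Hr0 Hr0d) a Ha) as [r [[Hr Hrd] Har]].
    exact (extremal_route_balanced n Hn L Hdem I Hb part Hpart c Hc s1 s2 E1 E2 Htwo d Hbound
             r Hdpos Hr Hrd a Har).
Qed.
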